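(* Let $A=K[X_1,\ldots,X_n]$ be a polynomial ring over a field $K$, let $I\subseteq A$ be a homogeneous ideal, let $\prec$ be a monomial order on $A$, and let $G$ be the reduced Gr\''obner basis of $I$ with respect to $\prec$. Then $\operatorname{supp}(G)\subseteq \operatorname{cs}(I)$; that is, for every $f\in G$, the set $\operatorname{supp}(f)$ is a minimal element (with respect to inclusion) of $\{\operatorname{supp}(h) : h\in I,\ h\neq 0\}$.
   Context: For a nonzero polynomial $f\in A$, $\operatorname{supp}(f)$ denotes the set of monomials appearing in $f$ with nonzero coefficient. For a subset $S\subseteq A$, $\operatorname{supp}(S)$ is the set $\{\operatorname{supp}(f): f\in S,\ f\neq 0\}$. The circuits set $\operatorname{cs}(S)$ of a subset $S\subseteq A$ is the set of all minimal (with respect to inclusion) elements of $\operatorname{supp}(S)$. The reduced Gr\''obner basis of $I$ with respect to $\prec$ is the unique Gr\''obner basis $\{f_1,\dots,f_r\}$ of $I$ whose elements are monic with respect to $\prec$ and such that the leading monomial of $f_i$ divides no monomial of $\operatorname{supp}(f_j)$ for $i\neq j$. *)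

From HB Require Import structures.
From mathcomp Require Import all_boot all_order all_algebra.
From mathcomp Require Import multinomials.mpoly.

Set Implicit Arguments.
Unset Strict Implicit.
Unset Printing Implicit Defensive.

Import GRing.Theory.
Local Open Scope ring_scope.

Section Groebner.
Variables (K : fieldType) (n : nat).

(* A monomial order: a total order on monomials, compatible with
   multiplication (addition of exponent vectors), with 1 as least element
   (hence a well-order by Dickson's lemma). *)
Definition monomial_order (le : rel 'X_{1..n}) : Prop :=
  [/\ reflexive le, antisymmetric le, transitive le /\ total le,
      (forall m1 m2 m : 'X_{1..n}, le m1 m2 -> le (m1 + m)%MM (m2 + m)%MM)
    & (forall m : 'X_{1..n}, le 0%MM m)].

Definition is_ideal (I : {mpoly K[n]} -> Prop) : Prop :=
  [/\ I 0,
      (forall f g, I f -> I g -> I (f + g))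
    & (forall a f, I f -> I (a * f))].

Definition hcomp (d : nat) (f : {mpoly K[n]}) : {mpoly K[n]} :=
  \sum_(m <- msupp f | mdeg m == d) f@_m *: 'X_[m].

(* Homogeneous ideal: an ideal containing all homogeneous components
   of each of its elements (equivalently, generated by homogeneous elements). *)
Definition homogeneous_ideal (I : {mpoly K[n]} -> Prop) : Prop :=
  is_ideal I /\ forall f d, I f -> I (hcomp d f).

Definition is_lm (le : rel 'X_{1..n}) (f : {mpoly K[n]}) (m : 'X_{1..n}) : Prop :=
  m \in msupp f /\ forall m', m' \in msupp f -> le m' m.

Definition mdivides (m1 m2 : 'X_{1..n}) : bool := (m1 <= m2)%MM.

Definition groebner_basis (le : rel 'X_{1..n}) (I : {mpoly K[n]} -> Prop)
    (G : seq {mpoly K[n]}) : Prop :=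
  (forall g, g \in G -> I g /\ g != 0) /\
  (forall f, I f -> f != 0 ->
     exists g m mg, [/\ g \in G, is_lm le f m, is_lm le g mg & mdivides mg m]).

Definition reduced_groebner_basis (le : rel 'X_{1..n}) (I : {mpoly K[n]} -> Prop)
    (G : seq {mpoly K[n]}) : Prop :=
  [/\ groebner_basis le I G,
      (forall g m, g \in G -> is_lm le g m -> g@_m = 1)
    & (forall g1 g2 m1, g1 \in G -> g2 \in G -> g1 != g2 -> is_lm le g1 m1 ->
         forall m, m \in msupp g2 -> ~~ mdivides m1 m)].

(* supp(S) = { supp f : f in S, f <> 0 }, supports viewed as finite sets
   of monomials (compared extensionally). *)
Definition in_supp_set (S : {mpoly K[n]} -> Prop) (s : seq 'X_{1..n}) : Prop :=
  exists f, [/\ S f, f != 0 & s =i msupp f].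

Definition in_cs (S : {mpoly K[n]} -> Prop) (s : seq 'X_{1..n}) : Prop :=
  in_supp_set S s /\
  forall t, in_supp_set S t -> {subset t <= s} -> {subset s <= t}.

End Groebner.

(* Let f be in the reduced Groebner basis G and let h be a nonzero element
   of I with supp(h) contained in supp(f).  The leading monomial of h lies in
   supp(f) and is divisible by the leading monomial of some g in G; by
   reducedness g = f, so h and f share their leading monomial.  Cancelling it,
   f - c h is an element of I with support in supp(f) but without the leading
   monomial of f; by the same argument it must vanish, so f is a multiple of h
   and supp(f) = supp(h). *)

From HB Require Import structures.
From mathcomp Require Import all_boot all_order all_algebra.
From mathcomp Require Import multinomials.mpoly.

Set Implicit Arguments.
Unset Strict Implicit.
Unset Printing Implicit Defensive.

Import GRing.Theory.
Local Open Scope ring_scope.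

Lemma monomial_order_mdivides (n : nat) (le : rel 'X_{1..n}) (a b : 'X_{1..n}) :
  monomial_order le -> mdivides a b -> le a b.
Proof.
move=> [_ _ _ le_addr le0m] dv_ab.
by have := le_addr 0%MM (b - a)%MM a (le0m _); rewrite add0m submK.
Qed.

Lemma is_lm_unique (K : fieldType) (n : nat) (le : rel 'X_{1..n})
    (f : {mpoly K[n]}) (m1 m2 : 'X_{1..n}) :
  antisymmetric le -> is_lm le f m1 -> is_lm le f m2 -> m1 = m2.
Proof.
move=> antile [f_m1 max_m1] [f_m2 max_m2].
by apply: antile; rewrite max_m2 ?max_m1.
Qed.

Section ReducedGroebnerBasis.

Variables (K : fieldType) (n : nat) (le : rel 'X_{1..n}).
Variables (I : {mpoly K[n]} -> Prop) (G : seq {mpoly K[n]}).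
Hypotheses (ordle : monomial_order le) (redG : reduced_groebner_basis le I G).

Let antile : antisymmetric le. Proof. by case: ordle. Qed.

Lemma reduced_gb_eq_of_mdivides (g f : {mpoly K[n]}) (mg m : 'X_{1..n}) :
  g \in G -> f \in G -> is_lm le g mg -> mdivides mg m -> m \in msupp f ->
  g = f.
Proof.
case: redG => _ _ irredG gG fG lm_g dv_m f_m.
apply/eqP; apply: contraTT dv_m => neq_gf.
exact: irredG lm_g _ f_m.
Qed.

Lemma reduced_gb_has_lm (f : {mpoly K[n]}) :
  f \in G -> exists mf, is_lm le f mf.
Proof.
case: redG => [[inIG lmG] _ _] fG; have [If nz_f] := inIG f fG.
by have [_ [mf [_ [_ lm_f _ _]]]] := lmG f If nz_f; exists mf.
Qed.

Lemma is_lm_of_subsupp (f h : {mpoly K[n]}) (mf : 'X_{1..n}) :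
  f \in G -> is_lm le f mf -> I h -> h != 0 ->
  {subset msupp h <= msupp f} -> is_lm le h mf.
Proof.
case: redG => [[_ lmG] _ _] fG lm_f Ih nz_h supp_hf.
have [g [m [mg [gG lm_h lm_g dv_m]]]] := lmG h Ih nz_h.
have f_m := supp_hf m lm_h.1.
have eq_gf := reduced_gb_eq_of_mdivides gG fG lm_g dv_m f_m; subst g.
have eq_mgf := is_lm_unique antile lm_g lm_f; subst mg.
suff -> : mf = m by [].
by apply: antile; rewrite lm_f.2 // (monomial_order_mdivides ordle dv_m).
Qed.

Hypothesis idealI : is_ideal I.

Lemma reduced_gb_supp_minimal (f h : {mpoly K[n]}) :
  f \in G -> I h -> h != 0 ->
  {subset msupp h <= msupp f} -> {subset msupp f <= msupp h}.
Proof.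
move=> fG Ih nz_h supp_hf.
case: idealI => _ IadD Imul; case: redG => [[inIG _] _ _].
have [mf lm_f] := reduced_gb_has_lm fG.
have [h_mf _] := is_lm_of_subsupp fG lm_f Ih nz_h supp_hf.
pose c := f@_mf / h@_mf; pose r := f - c *: h.
have Ir : I r by rewrite /r -mul_mpolyC -mulNr; apply/IadD/Imul; case: (inIG f fG).
have supp_rf : {subset msupp r <= msupp f}.
  by move=> m /msuppB_le; rewrite mem_cat => /orP[// | /msuppZ_le /supp_hf].
have r_mf : r@_mf = 0.
  by rewrite mcoeffB mcoeffZ /c mulfVK ?subrr // -mcoeff_msupp.
(* Cancelling the common leading monomial leaves nothing: the remainder would
   again have leading monomial [mf]. *)
have r0 : r = 0.
  apply/eqP/negPn/negP => nz_r.
  have [] := is_lm_of_subsupp fG lm_f Ir nz_r supp_rf.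
  by rewrite mcoeff_msupp r_mf eqxx.
by move/eqP: r0; rewrite subr_eq0 => /eqP ->; apply: msuppZ_le.
Qed.

End ReducedGroebnerBasis.

Theorem lemma2p2 (K : fieldType) (n : nat) (I : {mpoly K[n]} -> Prop)
    (le : rel 'X_{1..n}) (G : seq {mpoly K[n]}) :
  homogeneous_ideal I -> monomial_order le -> reduced_groebner_basis le I G ->
  forall f, f \in G -> in_cs I (msupp f).
Proof.
move=> [idealI _] ordle redG f fG.
have [[inIG _] _ _] := redG; have [If nz_f] := inIG f fG.
split; first by exists f.
move=> t [h [Ih nz_h eq_th]] sub_tf m f_m.
rewrite eq_th; apply: (reduced_gb_supp_minimal ordle redG idealI fG Ih nz_h) f_m.
by move=> m' h_m'; apply: sub_tf; rewrite eq_th.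
Qed.
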